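(* Let $\mathbf L\in\mathbb R^{n\times n}$ be positive semidefinite, let $\mathcal D$, $\mathbf W$ be a dictionary and positive weights, $r\geq 1$, $\alpha>0$, and let $l_i$, $\widehat{\mathbf L}$, $\tilde s$ be as in the context. Let $t\geq 0$ and let $\sigma=(\sigma_1,\dots,\sigma_t)\in[n]^t$ be any sequence with $l_{\sigma_j}>0$ for all $j$, and define the $t\times t$ matrix $\widetilde{\mathbf L}_\sigma$ by $[\widetilde{\mathbf L}_\sigma]_{ab}=\frac{\mathbf L_{\sigma_a\sigma_b}}{r\sqrt{l_{\sigma_a}l_{\sigma_b}}}$. Then $$\frac{e^{\tilde s}\det(\mathbf I+\alpha\widetilde{\mathbf L}_\sigma)}{e^{t/r}\det(\mathbf I+\alpha\widehat{\mathbf L})}\leq 1.$$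
   Context: A dictionary is a sequence $\mathcal D=(\mathcal D_1,\dots,\mathcal D_m)$ of elements of $[n]=\{1,\dots,n\}$, with a diagonal matrix $\mathbf W\in\mathbb R^{m\times m}$ of strictly positive weights. For index sequences $A,B$, $\mathbf L_{A,B}$ denotes the submatrix with rows indexed by $A$ and columns by $B$ (with repetitions allowed). The approximate marginals are $$l_i=\alpha\Big(\mathbf L_{ii}-\alpha\,\mathbf L_{\{i\},\mathcal D}\big(\alpha\mathbf L_{\mathcal D,\mathcal D}+\mathbf W^{-1}\big)^{-1}\mathbf L_{\mathcal D,\{i\}}\Big),\qquad i\in[n].$$ Further, $\widehat{\mathbf L}=\mathbf W^{1/2}\mathbf L_{\mathcal D,\mathcal D}\mathbf W^{1/2}\in\mathbb R^{m\times m}$ and $\tilde s=d_{\mathrm{eff}}(\alpha\widehat{\mathbf L})=\mathrm{tr}\big(\alpha\widehat{\mathbf L}(\alpha\widehat{\mathbf L}+\mathbf I)^{-1}\big)$. The determinant of a $0\times0$ matrix is $1$. *)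

From HB Require Import structures.
From mathcomp Require Import all_boot all_order all_algebra.
From mathcomp Require Import reals.
From mathcomp Require Import sequences.
From mathcomp.analysis Require Import exp.
Set Implicit Arguments. Unset Strict Implicit. Unset Printing Implicit Defensive.
Import Order.TTheory GRing.Theory Num.Theory.
Local Open Scope ring_scope.

Section Defs.
Variable R : realType.

Definition psd n (L : 'M[R]_n) : Prop :=
  L^T = L /\ forall x : 'cV[R]_n, 0 <= (x^T *m L *m x) 0 0.

(* L_{A,B} for index sequences A : 'I_p -> [n], B : 'I_q -> [n] (repetitions allowed) *)
Definition subL n p q (L : 'M[R]_n) (A : 'I_p -> 'I_n) (B : 'I_q -> 'I_n)
  : 'M[R]_(p, q) := \matrix_(a, b) L (A a) (B b).

(* approximate marginal l_i; W = diag_mx w, so W^{-1} = diag of w^-1 *)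
Definition approx_marg n m (L : 'M[R]_n) (D : 'I_m -> 'I_n) (w : 'I_m -> R)
  (alpha : R) (i : 'I_n) : R :=
  alpha * (L i i - alpha *
    (subL L (fun _ : 'I_1 => i) D
       *m invmx (alpha *: subL L D D + diag_mx (\row_k (w k)^-1))
       *m subL L D (fun _ : 'I_1 => i)) 0 0).

Definition Lhat n m (L : 'M[R]_n) (D : 'I_m -> 'I_n) (w : 'I_m -> R) : 'M[R]_m :=
  diag_mx (\row_k Num.sqrt (w k)) *m subL L D D *m diag_mx (\row_k Num.sqrt (w k)).

Definition deff m (A : 'M[R]_m) : R := \tr (A *m invmx (A + 1%:M)).

Definition Ltilde n m t (L : 'M[R]_n) (D : 'I_m -> 'I_n) (w : 'I_m -> R)
  (alpha r : R) (sigma : 'I_t -> 'I_n) : 'M[R]_t :=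
  \matrix_(a, b) (L (sigma a) (sigma b) /
     (r * Num.sqrt (approx_marg L D w alpha (sigma a) *
                    approx_marg L D w alpha (sigma b)))).

End Defs.

From HB Require Import structures.
From mathcomp Require Import all_boot all_order all_algebra.
From mathcomp Require Import reals sequences.
From mathcomp.analysis Require Import exp.
From mathcomp Require Import ring.
Set Implicit Arguments. Unset Strict Implicit. Unset Printing Implicit Defensive.
Import Order.TTheory GRing.Theory Num.Theory.
Local Open Scope ring_scope.

(* Factor L = G^T G (Cholesky factorisation, proved below for
   every PSD real matrix) and let B collect the columns of G indexed by the
   dictionary.  Put Z = I + alpha B W B^T and Y = I - alpha B X^{-1} B^T with
   X = alpha L_{D,D} + W^{-1}; the Woodbury identity gives Z Y = I, and
   l_i = alpha g_i^T Y g_i for the columns g_i of G.  Sylvester's identity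
   det(I + AC) = det(I + CA) turns det(I + alpha Lhat) into det Z, the
   push-through identity gives d_eff(alpha Lhat) = n - tr Y, and
   det(I + alpha Ltilde_sigma) = det(I + U) with
   U = (alpha / r) sum_j g_{sigma_j} g_{sigma_j}^T / l_{sigma_j}, so that
   tr(Y U) = t / r.  For the PSD matrix M = E^T (I + U) E, where Y = E E^T,
   the inequality det M <= exp(tr M - n) reads
   det Y det(I + U) <= exp(tr Y + t / r - n), which is the claim since
   det Z det Y = 1.
   The file proves the ring identities, then the PSD facts (Cholesky,
   det <= exp(tr - dim), closure properties), then the dictionary quantities
   in terms of Z and Y, and finally the theorem. *)

Section RingIdentities.
Variable R : comUnitRingType.

Lemma mx11_mulE (A B : 'M[R]_1) : (A *m B) 0 0 = A 0 0 * B 0 0.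
Proof. by rewrite mxE big_ord1. Qed.

Lemma dot_sym k (u v : 'cV[R]_k) : (v^T *m u) 0 0 = (u^T *m v) 0 0.
Proof. by rewrite -[v^T *m u]trmxK trmx_mul trmxK mxE. Qed.

(* Sylvester's determinant identity det(I + AC) = det(I + CA), obtained from
   the two block factorisations of [I -A; C I]. *)
Lemma det_1addmx_mulC p q (A : 'M[R]_(p, q)) (C : 'M_(q, p)) :
  \det (1%:M + A *m C) = \det (1%:M + C *m A).
Proof.
pose X := block_mx (1%:M : 'M_p) (- A) C (1%:M : 'M_q).
have eC : X *m block_mx 1%:M A 0 1%:M = block_mx 1%:M 0 C (1%:M + C *m A).
  by rewrite mulmx_block !mulmx1 !mul1mx !mulmx0 !addr0 subrr addrC.
have eA : X *m block_mx 1%:M 0 (- C) 1%:M = block_mx (1%:M + A *m C) (- A) 0 1%:M.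
  rewrite mulmx_block !mulmx1 !mul1mx !mulmx0 ?addr0 ?mulNmx ?mulmxN ?opprK.
  by rewrite subrr !add0r.
have := congr1 determinant eC; have := congr1 determinant eA.
rewrite !det_mulmx det_ublock det_lblock det_ublock det_lblock !det1 ?mulr1 ?mul1r.
by move=> -> ->.
Qed.

(* Push-through identity for the trace of a resolvent:
   tr(FC (FC + I)^{-1}) = q - tr((I + CF)^{-1}) for F : p x q, C : q x p. *)
Lemma mxtrace_resolvent p q (F : 'M[R]_(p, q)) (C : 'M_(q, p)) :
  (1%:M + C *m F) \in unitmx ->
  \tr (F *m C *m invmx (F *m C + 1%:M)) = q%:R - \tr (invmx (1%:M + C *m F)).
Proof.
move=> CF_unit.
have FC_unit : F *m C + 1%:M \in unitmx.
  by rewrite addrC unitmxE det_1addmx_mulC -unitmxE.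
have push : C *m invmx (F *m C + 1%:M) = invmx (1%:M + C *m F) *m C.
  have e : (1%:M + C *m F) *m C = C *m (F *m C + 1%:M).
    by rewrite mulmxDl mulmxDr mul1mx mulmx1 addrC mulmxA.
  by rewrite -[LHS](mulKmx CF_unit) [_ *m (C *m _)]mulmxA e (mulmxK FC_unit).
have resolvent : C *m F *m invmx (1%:M + C *m F) = 1%:M - invmx (1%:M + C *m F).
  have -> : 1%:M - invmx (1%:M + C *m F) =
      (1%:M + C *m F - 1%:M) *m invmx (1%:M + C *m F).
    by rewrite mulmxBl mulmxV // mul1mx.
  by rewrite [1%:M + C *m F - _]addrC addKr.
by rewrite -mulmxA push mulmxA mxtrace_mulC mulmxA resolvent linearB /= mxtrace1.
Qed.

End RingIdentities.

Section PsdMatrices.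
Variable R : realType.

Lemma diag_form_ge0 p (u : 'cV[R]_p) (d : 'rV_p) :
  (forall j, 0 <= d 0 j) -> 0 <= (u^T *m diag_mx d *m u) 0 0.
Proof.
move=> d_ge0; rewrite mxE; apply: sumr_ge0 => j _.
rewrite mul_mx_diag !mxE [X in X * _]mulrC -mulrA mulr_ge0 //.
by rewrite -expr2 sqr_ge0.
Qed.

Lemma diag_form_gt0 p (u : 'cV[R]_p) (d : 'rV_p) :
  (forall j, 0 < d 0 j) -> u != 0 -> 0 < (u^T *m diag_mx d *m u) 0 0.
Proof.
move=> d_gt0 u_neq0; rewrite lt_def diag_form_ge0 => [|j]; last exact: ltW.
rewrite andbT; apply: contra u_neq0; rewrite mxE => /eqP/psumr_eq0P u_sq0.
apply/eqP/matrixP => i j; rewrite (ord1 j) mxE.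
have term_ge0 k : 0 <= (u^T *m diag_mx d) 0 k * u k 0.
  by rewrite mul_mx_diag !mxE mulrAC -expr2 mulr_ge0 ?sqr_ge0 ?ltW.
move: (u_sq0 (fun k _ => term_ge0 k) i isT).
rewrite mul_mx_diag !mxE mulrAC => /eqP.
by rewrite mulf_eq0 (gt_eqF (d_gt0 i)) orbF -expr2 sqrf_eq0 => /eqP.
Qed.

Lemma sqnorm_ge0 p (u : 'cV[R]_p) : 0 <= (u^T *m u) 0 0.
Proof.
have := @diag_form_ge0 _ u (const_mx 1) (fun j => ltac:(by rewrite mxE)).
by rewrite diag_const_mx mulmx1.
Qed.

Lemma block_form k (a g : R) (v u : 'cV[R]_k) (N : 'M_k) :
  ((col_mx (g%:M : 'M_1) u)^T *m block_mx (a%:M : 'M_1) v^T v N *m col_mx g%:M u) 0 0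
  = g * g * a + 2 * g * (u^T *m v) 0 0 + (u^T *m N *m u) 0 0.
Proof.
rewrite tr_col_mx mul_row_block mul_row_col !mulmxDl !mxE.
rewrite tr_scalar_mx !mul_scalar_mx !big_ord1 !mxE /=.
have -> : \sum_(j < k) (g *: v^T) 0 j * u j 0 = g * \sum_(j < k) u^T 0 j * v j 0.
  by rewrite mulr_sumr; apply: eq_bigr => j _; rewrite !mxE; ring.
by rewrite !mulr1n; ring.
Qed.

Section SchurComplement.
(* Positivity of the quadratic form of [a v^T; v N], which we then use to
   split off the first row and column of a PSD matrix. *)
Variables (k : nat) (a : R) (v : 'cV[R]_k) (N : 'M[R]_k).
Hypothesis form_ge0 : forall g (u : 'cV_k),
  0 <= g * g * a + 2 * g * (u^T *m v) 0 0 + (u^T *m N *m u) 0 0.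

(* Restricting the form to (g; 0) and (0; u) gives the diagonal blocks. *)
Lemma corner_ge0 : 0 <= a.
Proof. by have := form_ge0 1 0; rewrite !trmx0 !mul0mx !mxE !mulr0 !addr0 !mul1r. Qed.

Lemma lower_form_ge0 (u : 'cV_k) : 0 <= (u^T *m N *m u) 0 0.
Proof. by have := form_ge0 0 u; rewrite !mulr0 !mul0r !add0r. Qed.

Lemma corner0_col0 : a = 0 -> v = 0.
Proof.
move=> a0.
have dot0 (u : 'cV_k) : (u^T *m v) 0 0 = 0.
  apply/eqP; apply: contraT => dot_neq0.
  have := form_ge0 (- ((u^T *m N *m u) 0 0 + 1) / (2 * (u^T *m v) 0 0)) u.
  rewrite a0 mulr0 add0r.
  have -> : 2 * (- ((u^T *m N *m u) 0 0 + 1) / (2 * (u^T *m v) 0 0)) * (u^T *m v) 0 0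
     = - ((u^T *m N *m u) 0 0 + 1) by field.
  by rewrite opprD addrAC addNr add0r oppr_ge0 ler10.
apply/eqP; apply: contraT => v_neq0.
have := @diag_form_gt0 _ v (const_mx 1) (fun j => ltac:(by rewrite mxE ltr01)) v_neq0.
by rewrite diag_const_mx mulmx1 dot0 ltxx.
Qed.

Lemma schur_form_ge0 (u : 'cV_k) :
  0 <= (u^T *m (N - a^-1 *: (v *m v^T)) *m u) 0 0.
Proof.
have vv : (u^T *m (v *m v^T) *m u) 0 0 = (u^T *m v) 0 0 ^+ 2.
  by rewrite mulmxA -mulmxA mx11_mulE dot_sym expr2.
rewrite mulmxBr mulmxBl -scalemxAr -scalemxAl.
rewrite [X in 0 <= X]mxE [X in _ + X]mxE [X in _ - X]mxE vv.
have [->|a_neq0] := eqVneq a 0; first by rewrite invr0 mul0r subr0 lower_form_ge0.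
have := form_ge0 (- (u^T *m v) 0 0 / a) u.
suff -> : - (u^T *m v) 0 0 / a * (- (u^T *m v) 0 0 / a) * a +
  2 * (- (u^T *m v) 0 0 / a) * (u^T *m v) 0 0 + (u^T *m N *m u) 0 0 =
  (u^T *m N *m u) 0 0 - a^-1 * (u^T *m v) 0 0 ^+ 2 by [].
by field.
Qed.

End SchurComplement.

(* By induction, splitting off the first row and column via the Schur
   complement; a zero pivot forces a zero first column. *)
Lemma cholesky k (M : 'M[R]_k) : psd M -> exists E : 'M_k, is_trig_mx E /\ M = E *m E^T.
Proof.
elim: k M => [|k IH] M [M_sym M_form].
  by exists 0; split; [exact: mx0_is_trig | apply/matrixP => -[]].
pose M' : 'M[R]_(1 + k) := M.
pose a : R := ulsubmx M' 0 0; pose v : 'cV[R]_k := dlsubmx M'.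
pose N : 'M[R]_k := drsubmx M'.
have eM : M' = block_mx (a%:M : 'M_1) v^T v N.
  rewrite -[M' in LHS]submxK -mx11_scalar; congr block_mx.
  by rewrite /v trmx_dlsub M_sym.
have form_ge0 g (u : 'cV_k) :
    0 <= g * g * a + 2 * g * (u^T *m v) 0 0 + (u^T *m N *m u) 0 0.
  by rewrite -block_form -eM; exact: M_form.
have schur_psd : psd (N - a^-1 *: (v *m v^T)).
  split; last exact: schur_form_ge0 form_ge0.
  by rewrite linearB linearZ /= trmx_mul trmxK /N trmx_drsub M_sym.
have [F [F_trig eF]] := IH _ schur_psd.
pose s := Num.sqrt a.
pose E : 'M[R]_(1 + k) := block_mx (s%:M : 'M_1) 0 (s^-1 *: v) F.
exists E; split.
  by rewrite /E (@is_trig_block_mx _ 1 k 1 k) // eqxx scalar_mx_is_trig F_trig.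
have ss : s * s = a by rewrite -expr2 sqr_sqrtr // (corner_ge0 form_ge0).
have ssv : s * s^-1 *: v = v.
  have [a0|a_neq0] := eqVneq a 0; first by rewrite (corner0_col0 form_ge0) // scaler0.
  by rewrite divff ?scale1r // /s sqrtr_eq0 -ltNge lt_def a_neq0 (corner_ge0 form_ge0).
change (M' = E *m E^T).
rewrite eM /E tr_block_mx mulmx_block !trmx0 !mulmx0 !mul0mx !addr0 tr_scalar_mx.
rewrite -scalar_mxM ss linearZ /= mul_scalar_mx mul_mx_scalar !scalerA.
rewrite -linearZ /= ssv -scalemxAl -scalemxAr scalerA -invfM ss -eF.
by rewrite addrC subrK.
Qed.

Lemma psd_det_ge0 k (M : 'M[R]_k) : psd M -> 0 <= \det M.
Proof.
by move=> /cholesky [E [_ ->]]; rewrite det_mulmx det_tr -expr2 sqr_ge0.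
Qed.

(* For PSD M of size k, det M <= exp(tr M - k): with M = E E^T, det M is the
   product of the E_ii^2, tr M is the sum of all E_ij^2, and x <= exp(x - 1). *)
Lemma psd_det_le_expR k (M : 'M[R]_k) : psd M -> \det M <= expR (\tr M - k%:R).
Proof.
move=> /cholesky [E [E_trig ->]].
rewrite det_mulmx det_tr det_trig // -expr2 -prodrXl.
have -> : \tr (E *m E^T) = \sum_i \sum_j E i j ^+ 2.
  rewrite /mxtrace; apply: eq_bigr => i _; rewrite mxE; apply: eq_bigr => j _.
  by rewrite mxE expr2.
apply: (@le_trans _ _ (expR (\sum_i (E i i ^+ 2 - 1)))).
  rewrite expR_sum; apply: ler_prod => i _; rewrite sqr_ge0 /=.
  by have := expR_ge1Dx (E i i ^+ 2 - 1); rewrite addrC subrK.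
rewrite ler_expR sumrB sumr_const card_ord lerD2r.
apply: ler_sum => i _; rewrite (bigD1 i) //= lerDl.
by apply: sumr_ge0 => j _; exact: sqr_ge0.
Qed.

Lemma psd_gram p q (B : 'M[R]_(p, q)) : psd (B^T *m B).
Proof.
split; first by rewrite trmx_mul trmxK.
move=> u; have -> : u^T *m (B^T *m B) *m u = (B *m u)^T *m (B *m u).
  by rewrite trmx_mul !mulmxA.
exact: sqnorm_ge0.
Qed.

Lemma psd_congr p (M E : 'M[R]_p) : psd M -> psd (E^T *m M *m E).
Proof.
move=> [M_sym M_form]; split; first by rewrite !trmx_mul trmxK M_sym mulmxA.
by move=> u; have := M_form (E *m u); rewrite trmx_mul !mulmxA.
Qed.

Lemma psd_inv p (Z Y : 'M[R]_p) : psd Z -> Z *m Y = 1%:M -> psd Y.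
Proof.
move=> [Z_sym Z_form] ZY; have [Z_unit _] := mulmx1_unit ZY.
have eY : Y = invmx Z by rewrite -[Y]mul1mx -(mulVmx Z_unit) -mulmxA ZY mulmx1.
have Y_sym : Y^T = Y by rewrite eY trmx_inv Z_sym.
split => // u; have := Z_form (Y *m u).
by rewrite trmx_mul Y_sym -!mulmxA [Z *m (Y *m u)]mulmxA ZY mul1mx.
Qed.

Lemma psd_1add_diag_form p q (c : R) (P : 'M[R]_(p, q)) (d : 'rV_q) :
  0 <= c -> (forall j, 0 <= d 0 j) -> psd (1%:M + c *: (P *m diag_mx d *m P^T)).
Proof.
move=> c_ge0 d_ge0; split.
  by rewrite linearD linearZ /= trmx1 !trmx_mul trmxK tr_diag_mx mulmxA.
move=> u; rewrite mulmxDr mulmxDl mulmx1 -scalemxAr -scalemxAl.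
rewrite [X in 0 <= X]mxE [X in _ + X]mxE addr_ge0 ?sqnorm_ge0 // mulr_ge0 //.
have -> : u^T *m (P *m diag_mx d *m P^T) *m u = (P^T *m u)^T *m diag_mx d *m (P^T *m u).
  by rewrite trmx_mul trmxK !mulmxA.
exact: diag_form_ge0.
Qed.

(* A PSD matrix plus a positive diagonal is invertible, since its quadratic
   form is positive on every nonzero vector. *)
Lemma psd_add_posdiag_unitmx p (c : R) (P : 'M[R]_p) (d : 'rV_p) :
  psd P -> 0 <= c -> (forall j, 0 < d 0 j) -> c *: P + diag_mx d \in unitmx.
Proof.
move=> [_ P_form] c_ge0 d_gt0; rewrite unitmxE unitfE.
apply/negP => /det0P [v v_neq0 vX].
have : 0 < (v *m (c *: P + diag_mx d) *m v^T) 0 0.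
  rewrite mulmxDr mulmxDl -scalemxAr -scalemxAl [X in 0 < X]mxE mxE.
  rewrite ltr_wpDl ?mulr_ge0 //; first by have := P_form v^T; rewrite trmxK.
  have := @diag_form_gt0 _ v^T d d_gt0; rewrite trmxK; apply.
  by apply: contra v_neq0 => /eqP v0; rewrite -[v]trmxK v0 trmx0.
by rewrite vX mul0mx mxE ltxx.
Qed.

End PsdMatrices.

Section ColumnSelection.
Variable R : realType.

Definition colsel n p (G : 'M[R]_n) (A : 'I_p -> 'I_n) : 'M[R]_(n, p) :=
  \matrix_(x, a) G x (A a).

Lemma subL_gram n p q (G : 'M[R]_n) (A : 'I_p -> 'I_n) (B : 'I_q -> 'I_n) :
  subL (G^T *m G) A B = (colsel G A)^T *m colsel G B.
Proof.
by apply/matrixP => a b; rewrite !mxE; apply: eq_bigr => x _; rewrite !mxE.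
Qed.

Lemma colsel_congr_diag n p (G Y : 'M[R]_n) (A : 'I_p -> 'I_n) (j : 'I_p) :
  ((colsel G A)^T *m Y *m colsel G A) j j =
  ((colsel G (fun _ : 'I_1 => A j))^T *m Y *m colsel G (fun _ : 'I_1 => A j)) 0 0.
Proof.
rewrite !mxE; apply: eq_bigr => y _; rewrite !mxE; congr (_ * _).
by apply: eq_bigr => x _; rewrite !mxE.
Qed.

End ColumnSelection.

Section Dictionary.
Variables (R : realType) (n m : nat) (G : 'M[R]_n) (D : 'I_m -> 'I_n).
Variables (w : 'I_m -> R) (alpha : R).
Hypotheses (w_gt0 : forall k, 0 < w k) (alpha_gt0 : 0 < alpha).

Local Notation L := (G^T *m G).
Local Notation B := (colsel G D).

Definition gcol (i : 'I_n) : 'cV[R]_n := colsel G (fun _ : 'I_1 => i).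
Definition weight_mx : 'M[R]_m := diag_mx (\row_k w k).
Definition sqrt_weight_mx : 'M[R]_m := diag_mx (\row_k Num.sqrt (w k)).
(* X = alpha L_{D,D} + W^{-1}, the matrix inverted in the marginals *)
Definition dict_mx : 'M[R]_m := alpha *: (B^T *m B) + diag_mx (\row_k (w k)^-1).
(* Z = I + alpha B W B^T and its inverse Y, in Woodbury form *)
Definition Zmx : 'M[R]_n := 1%:M + alpha *: (B *m weight_mx *m B^T).
Definition Ymx : 'M[R]_n := 1%:M - alpha *: (B *m invmx dict_mx *m B^T).

Lemma dict_mx_unit : dict_mx \in unitmx.
Proof.
apply: psd_add_posdiag_unitmx; [exact: psd_gram | exact: ltW | move=> j].
by rewrite mxE invr_gt0.
Qed.

Lemma Zmx_mulY : Zmx *m Ymx = 1%:M.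
Proof.
have WX : weight_mx *m dict_mx = 1%:M + alpha *: (weight_mx *m (B^T *m B)).
  rewrite /dict_mx mulmxDr -scalemxAr addrC mulmx_diag; congr (_ + _).
  rewrite -diag_const_mx; congr diag_mx; apply/matrixP => i j.
  by rewrite !mxE divff // gt_eqF.
have ZB : Zmx *m B = B *m (weight_mx *m dict_mx).
  by rewrite WX /Zmx mulmxDl mul1mx mulmxDr mulmx1 -!scalemxAl -!scalemxAr !mulmxA.
rewrite /Ymx mulmxBr mulmx1 -scalemxAr !mulmxA ZB.
by rewrite -[B *m _ *m invmx _](mulmxA B) (mulmxK dict_mx_unit) /Zmx addrK.
Qed.

Lemma Ymx_invmx : Ymx = invmx Zmx.
Proof.
have [Z_unit _] := mulmx1_unit Zmx_mulY.
by rewrite -[Ymx]mul1mx -(mulVmx Z_unit) -mulmxA Zmx_mulY mulmx1.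
Qed.

Lemma Zmx_psd : psd Zmx.
Proof. by apply: psd_1add_diag_form => [|j]; rewrite ?mxE ltW. Qed.

Lemma Ymx_psd : psd Ymx.
Proof. exact: psd_inv Zmx_psd Zmx_mulY. Qed.

Lemma approx_margE (i : 'I_n) :
  approx_marg L D w alpha i = alpha * ((gcol i)^T *m Ymx *m gcol i) 0 0.
Proof.
rewrite /approx_marg.
have -> : L i i = subL L (fun _ : 'I_1 => i) (fun _ : 'I_1 => i) 0 0.
  by rewrite /subL mxE.
rewrite !subL_gram -/(gcol i) -/dict_mx /Ymx.
rewrite mulmxBr mulmxBl mulmx1 -scalemxAr -scalemxAl !mulmxA.
by rewrite [X in _ = alpha * X]mxE [X in _ = alpha * (_ + X)]mxE [X in _ = alpha * (_ - X)]mxE.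
Qed.

(* alpha Lhat = F C with C F = alpha B W B^T, so Lhat can be traded for Z. *)
Lemma Lhat_factor :
  alpha *: Lhat L D w = (sqrt_weight_mx *m B^T) *m (alpha *: (B *m sqrt_weight_mx)).
Proof. by rewrite /Lhat subL_gram -scalemxAr !mulmxA. Qed.

Lemma sqrt_weight_mx_sq : sqrt_weight_mx *m sqrt_weight_mx = weight_mx.
Proof.
rewrite mulmx_diag; congr diag_mx.
by apply/matrixP => i j; rewrite !mxE -expr2 sqr_sqrtr // ltW.
Qed.

Lemma Lhat_cofactor :
  1%:M + (alpha *: (B *m sqrt_weight_mx)) *m (sqrt_weight_mx *m B^T) = Zmx.
Proof. by rewrite -scalemxAl !mulmxA -(mulmxA B) sqrt_weight_mx_sq. Qed.

Lemma det_Lhat : \det (1%:M + alpha *: Lhat L D w) = \det Zmx.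
Proof. by rewrite Lhat_factor det_1addmx_mulC Lhat_cofactor. Qed.

Lemma deff_Lhat : deff (alpha *: Lhat L D w) = n%:R - \tr Ymx.
Proof.
have [Z_unit _] := mulmx1_unit Zmx_mulY.
by rewrite /deff Lhat_factor mxtrace_resolvent Lhat_cofactor -?Ymx_invmx.
Qed.

Lemma det_Zmx_mulY : \det Zmx * \det Ymx = 1.
Proof. by rewrite -det_mulmx Zmx_mulY det1. Qed.

Lemma det_Zmx_gt0 : 0 < \det Zmx.
Proof.
rewrite lt_def (psd_det_ge0 Zmx_psd) andbT.
by apply/eqP => Z0; move: det_Zmx_mulY; rewrite Z0 mul0r => /eqP; rewrite eq_sym oner_eq0.
Qed.

End Dictionary.

Section SampledMarginals.
Variables (R : realType) (n m : nat) (G : 'M[R]_n) (D : 'I_m -> 'I_n).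
Variables (w : 'I_m -> R) (alpha r : R) (t : nat) (sigma : 'I_t -> 'I_n).
Hypotheses (w_gt0 : forall k, 0 < w k) (alpha_gt0 : 0 < alpha) (r_gt0 : 0 < r).
Hypothesis marg_gt0 : forall j, 0 < approx_marg (G^T *m G) D w alpha (sigma j).

Local Notation L := (G^T *m G).
Local Notation l j := (approx_marg L D w alpha (sigma j)).
Local Notation S := (colsel G sigma).

Definition inv_marg_mx : 'M[R]_t := diag_mx (\row_j (l j)^-1).
Definition inv_sqrt_marg_mx : 'M[R]_t := diag_mx (\row_j (Num.sqrt (l j))^-1).
Definition Umx : 'M[R]_n := (alpha / r) *: (S *m inv_marg_mx *m S^T).

(* alpha Ltilde = F C with C F = U. *)
Lemma Ltilde_factor : alpha *: Ltilde L D w alpha r sigma =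
  (inv_sqrt_marg_mx *m S^T) *m ((alpha / r) *: (S *m inv_sqrt_marg_mx)).
Proof.
rewrite -scalemxAr !mulmxA -(mulmxA _ S^T) -subL_gram.
apply/matrixP => a b; rewrite mxE mul_mx_diag mxE mul_diag_mx !mxE.
by rewrite sqrtrM ?ltW // !invfM; ring.
Qed.

Lemma inv_sqrt_marg_mx_sq : inv_sqrt_marg_mx *m inv_sqrt_marg_mx = inv_marg_mx.
Proof.
rewrite mulmx_diag; congr diag_mx.
by apply/matrixP => i j; rewrite !mxE -invfM -expr2 sqr_sqrtr // ltW.
Qed.

Lemma det_Ltilde :
  \det (1%:M + alpha *: Ltilde L D w alpha r sigma) = \det (1%:M + Umx).
Proof.
rewrite Ltilde_factor det_1addmx_mulC -scalemxAl !mulmxA -(mulmxA S).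
by rewrite inv_sqrt_marg_mx_sq.
Qed.

(* Each sampled column contributes (alpha / r) g^T Y g / l = 1 / r to tr(Y U). *)
Lemma trace_Ymx_Umx : \tr (Ymx G D w alpha *m Umx) = t%:R / r.
Proof.
rewrite /Umx -scalemxAr mxtraceZ mulmxA mxtrace_mulC !mulmxA /inv_marg_mx.
rewrite mul_mx_diag /mxtrace.
have -> : \sum_i (\matrix_(i0, j) ((S^T *m Ymx G D w alpha *m S) i0 j *
              (\row_j (l j)^-1) 0 j)) i i = \sum_(i < t) alpha^-1.
  apply: eq_bigr => j _; rewrite mxE [(\row_j _) 0 _]mxE colsel_congr_diag.
  have := marg_gt0 j; rewrite approx_margE => l_gt0.
  rewrite -/(gcol G (sigma j)) invfM mulrCA divff ?mulr1 //.
  by rewrite gt_eqF // -(pmulr_rgt0 _ alpha_gt0).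
rewrite sumr_const card_ord -[_ *+ t]mulr_natl.
by rewrite mulrCA mulrAC mulfV ?gt_eqF // mul1r.
Qed.

(* Main estimate, applied to the PSD matrix Y^{1/2} (I + U) Y^{1/2}. *)
Lemma det_Ymx_1addU_le :
  \det (Ymx G D w alpha) * \det (1%:M + Umx)
  <= expR (\tr (Ymx G D w alpha) + t%:R / r - n%:R).
Proof.
have [E [_ eY]] := cholesky (Ymx_psd G D w_gt0 alpha_gt0).
have U_psd : psd (1%:M + Umx).
  apply: psd_1add_diag_form => [|j]; first by rewrite divr_ge0 // ltW.
  by rewrite mxE invr_ge0 ltW.
have := psd_det_le_expR (psd_congr E U_psd).
have detY : \det (Ymx G D w alpha) = \det E ^+ 2 by rewrite eY det_mulmx det_tr.
rewrite !det_mulmx det_tr mulrAC -expr2 -detY.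
rewrite mxtrace_mulC mulmxA -eY mulmxDr mulmx1 mxtraceD trace_Ymx_Umx.
by rewrite mulrC.
Qed.

(* The theorem for L = G^T G, in product form: multiply the estimate above by
   det Z = 1 / det Y and use the expressions of det(I + alpha Lhat) and of
   d_eff(alpha Lhat) through Z and Y. *)
Lemma ratio_bound :
  expR (deff (alpha *: Lhat L D w)) * \det (1%:M + alpha *: Ltilde L D w alpha r sigma)
  <= expR (t%:R / r) * \det (1%:M + alpha *: Lhat L D w).
Proof.
rewrite deff_Lhat // det_Ltilde det_Lhat //.
have -> : \det (1%:M + Umx) =
    \det (Zmx G D w alpha) * (\det (Ymx G D w alpha) * \det (1%:M + Umx)).
  by rewrite mulrA det_Zmx_mulY // mul1r.
rewrite mulrCA [X in _ <= X]mulrC ler_wpM2l ?(psd_det_ge0 (Zmx_psd _ _ w_gt0 alpha_gt0)) //.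
apply: le_trans (ler_wpM2l (expR_ge0 _) det_Ymx_1addU_le) _.
rewrite -expRD.
by have -> : n%:R - \tr (Ymx G D w alpha) + (\tr (Ymx G D w alpha) + t%:R / r - n%:R)
  = t%:R / r by ring.
Qed.

End SampledMarginals.

Theorem mainTheorem6 (R : realType) (n m : nat) (L : 'M[R]_n)
  (D : 'I_m -> 'I_n) (w : 'I_m -> R) (r alpha : R) (t : nat)
  (sigma : 'I_t -> 'I_n) :
  psd L ->
  (forall k, 0 < w k) ->
  1 <= r -> 0 < alpha ->
  (forall j, 0 < approx_marg L D w alpha (sigma j)) ->
  expR (deff (alpha *: Lhat L D w)) * \det (1%:M + alpha *: Ltilde L D w alpha r sigma)
    / (expR (t%:R / r) * \det (1%:M + alpha *: Lhat L D w)) <= 1.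
Proof.
move=> L_psd w_gt0 r_ge1 alpha_gt0 marg_gt0.
have r_gt0 : 0 < r := lt_le_trans ltr01 r_ge1.
have [E [_ eL]] := cholesky L_psd.
rewrite -[E in E *m _]trmxK in eL; subst L.
have det_pos : 0 < \det (1%:M + alpha *: Lhat (E^T^T *m E^T) D w).
  by rewrite det_Lhat // det_Zmx_gt0.
rewrite ler_pdivrMr ?mulr_gt0 ?expR_gt0 // mul1r.
exact: ratio_bound.
Qed.
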